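(* Let $G$ be a non-empty graph on $n$ vertices. Then $G$ has a spanning subgraph $G'$ with $e(G')\geq e(G)/2$ such that, if $q$ denotes the number of copies of $C_4$ in $G'$, every edge of $G'$ belongs to at most $\frac{16\log n}{e(G')}q$ copies of $C_4$ in $G'$.
   Context: A copy of $C_4$ is a subgraph isomorphic to the $4$-cycle. $\log$ is the natural logarithm; $e(\cdot)$ denotes number of edges. *)

From mathcomp Require Import all_boot.
From Stdlib Require Import Reals.
Set Implicit Arguments. Unset Strict Implicit. Unset Printing Implicit Defensive.

(* A simple graph on the vertex type T (a finType; n = #|T|) is given by its
   edge set E : {set {set T}}, each edge being a 2-element vertex set. *)
Definition simple_graph (T : finType) (E : {set {set T}}) : bool :=
  [forall e in E, #|e| == 2].

Definition cycle4 (T : finType) (a b c d : T) : {set {set T}} :=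
  [set [set a; b]; [set b; c]; [set c; d]; [set d; a]].

(* Q is (the edge set of) a copy of C_4 in the graph with edge set E.
   A copy of C_4 (a subgraph isomorphic to C_4, without isolated vertices)
   is determined by its edge set. *)
Definition is_C4_copy (T : finType) (E Q : {set {set T}}) : bool :=
  [exists a : T, exists b : T, exists c : T, exists d : T,
     [&& uniq [:: a; b; c; d], Q == cycle4 a b c d & Q \subset E]].

Definition C4_copies (T : finType) (E : {set {set T}}) : {set {set {set T}}} :=
  [set Q | is_C4_copy E Q].

Definition C4_deg (T : finType) (E : {set {set T}}) (e : {set T}) : nat :=
  #|[set Q in C4_copies E | e \in Q]|.

(* Greedy deletion of overloaded edges.

   Call a subgraph F balanced when every edge of F lies in at most
   16 log n / e(F) * q(F) copies of C_4, where q(F) is the number of copies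
   of C_4 in F.  Starting from F = E, delete an unbalanced edge as long as
   one exists.  Such an edge lies in more than a 16 log n / e(F) >=
   16 log n / e(E) fraction of all copies, so every deletion multiplies q by
   at most exp (-16 log n / e(E)).  Since q(E) <= n^4 = exp (4 log n), the
   invariant  q(F) <= exp (4 log n - 16 log n (e(E) - e(F)) / e(E))  holds
   throughout.  If the process were to go below e(E)/2 edges, the bound would
   force q(F) < 1, while an unbalanced edge needs at least one copy of C_4. *)
From mathcomp Require Import all_boot.
From Stdlib Require Import Reals Lra Classical.
From mathcomp Require Import zify.
Set Implicit Arguments. Unset Strict Implicit. Unset Printing Implicit Defensive.

Lemma C4_copies_setD1 (T : finType) (F : {set {set T}}) (e : {set T}) :
  C4_copies (F :\ e) = [set Q in C4_copies F | e \notin Q].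
Proof.
apply/setP => Q; rewrite !inE /is_C4_copy; apply/idP/idP.
- case/existsP=> a /existsP[b /existsP[c /existsP[d /and3P[uniq_abcd defQ]]]].
  rewrite subsetD1 => /andP[sQF eQ]; rewrite eQ andbT.
  by apply/existsP; exists a; apply/existsP; exists b; apply/existsP; exists c;
     apply/existsP; exists d; rewrite uniq_abcd defQ sQF.
- case/andP=> /existsP[a /existsP[b /existsP[c /existsP[d /and3P[uniq_abcd defQ sQF]]]]] eQ.
  by apply/existsP; exists a; apply/existsP; exists b; apply/existsP; exists c;
     apply/existsP; exists d; rewrite uniq_abcd defQ subsetD1 sQF eQ.
Qed.

Lemma card_C4_copies_setD1 (T : finType) (F : {set {set T}}) (e : {set T}) :
  (#|C4_copies (F :\ e)| + C4_deg F e = #|C4_copies F|)%N.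
Proof.
rewrite C4_copies_setD1 /C4_deg.
rewrite -(cardID [set Q : {set {set T}} | e \in Q] (C4_copies F)) addnC.
by congr (_ + _)%N; apply: eq_card => Q; rewrite !inE andbC.
Qed.

Lemma C4_deg_le (T : finType) (F : {set {set T}}) (e : {set T}) :
  (C4_deg F e <= #|C4_copies F|)%N.
Proof. by apply/subset_leq_card/subsetP => Q; rewrite inE => /andP[]. Qed.

(* A copy of C_4 is determined by its vertices a, b, c, d: at most n^4 copies. *)
Lemma card_C4_copies_le (T : finType) (F : {set {set T}}) :
  (#|C4_copies F| <= #|T| * #|T| * #|T| * #|T|)%N.
Proof.
have sub_img : C4_copies F \subset
    [set cycle4 x.1.1.1 x.1.1.2 x.1.2 x.2 | x in [set: T * T * T * T]].
  apply/subsetP => Q; rewrite inE.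
  case/existsP=> a /existsP[b /existsP[c /existsP[d /and3P[_ /eqP -> _]]]].
  by apply/imsetP; exists (a, b, c, d); rewrite ?inE.
apply: leq_trans (subset_leq_card sub_img) _.
by apply: leq_trans (leq_imset_card _ _) _; rewrite cardsT !card_prod.
Qed.

Lemma card_ge2_of_edge (T : finType) (E : {set {set T}}) (e : {set T}) :
  simple_graph E -> e \in E -> (2 <= #|T|)%N.
Proof.
move=> sg eE; have := forallP sg e; rewrite eE /= => /eqP <-; exact: max_card.
Qed.

Local Open Scope R_scope.

(* log n > 1/2 for n >= 2; this makes 16 log n > 8, so an overloaded F has
   at least three edges. *)
Lemma ln_gt_half (n : nat) : (2 <= n)%nat -> / 2 < ln (INR n).
Proof.
move=> n2; apply: Rlt_le_trans ln_lt_2 _.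
have le2n : 2 <= INR n by change 2 with (INR 2); apply/le_INR/leP.
case: (Rle_lt_or_eq_dec _ _ le2n) => [lt2n | <-]; last exact: Rle_refl.
by left; apply: ln_increasing; lra.
Qed.

Lemma share_lt (Q D c f : R) :
  0 <= c -> 0 < f -> 1 <= Q -> D <= Q -> c / f * Q < D -> c < f.
Proof.
move=> c_ge0 f_gt0 Q_ge1 DQ excess.
have share_lt1 : c / f < 1 by nra.
have -> : c = c / f * f by field; lra.
nra.
Qed.

Lemma remove_share_exp (Q D c f m a : R) :
  0 <= Q -> 0 <= c -> 0 < f -> f <= m -> c / f * Q < D ->
  Q <= exp a -> Q - D <= exp (a - c / m).
Proof.
move=> Q_ge0 c_ge0 f_gt0 fm excess Qa.
have share_le : c / m <= c / f.
  by apply: Rmult_le_compat_l => //; apply: Rinv_le_contravar; lra.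
have lin := exp_ineq1_le (- (c / m)).
have := exp_pos (- (c / m)).
rewrite /Rminus exp_plus.
have : Q * exp (- (c / m)) <= exp a * exp (- (c / m)).
  by apply: Rmult_le_compat_r; [left; exact: exp_pos | exact: Qa].
nra.
Qed.

Lemma budget_lt1 (L m f : R) :
  0 < L -> 0 < m -> 4 * f < 3 * m -> exp (4 * L - 16 * L * (m - f) / m) < 1.
Proof.
move=> L_gt0 m_gt0 fm.
have -> : 4 * L - 16 * L * (m - f) / m = 4 * L * (4 * f - 3 * m) * / m.
  by field; lra.
rewrite -exp_0; apply: exp_increasing.
have inv_m_gt0 := Rinv_0_lt_compat _ m_gt0.
have numer_lt0 : 4 * L * (4 * f - 3 * m) < 0 by nra.
nra.
Qed.

Definition C4_balanced (T : finType) (F : {set {set T}}) : Prop :=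
  forall e, e \in F ->
    INR (C4_deg F e) <= 16 * ln (INR #|T|) / INR #|F| * INR #|C4_copies F|.

(* The bound on the number of C_4 copies maintained while deleting edges
   of E down to F. *)
Definition C4_budget (T : finType) (E F : {set {set T}}) : R :=
  exp (4 * ln (INR #|T|) - 16 * ln (INR #|T|) * (INR #|E| - INR #|F|) / INR #|E|).

Section GreedyDeletion.
Variables (T : finType) (E : {set {set T}}).
Hypothesis sgE : simple_graph E.

Local Notation L := (ln (INR #|T|)).

Lemma delete_unbalanced_edge (F : {set {set T}}) (e : {set T}) :
  F \subset E -> e \in F ->
  16 * L / INR #|F| * INR #|C4_copies F| < INR (C4_deg F e) ->
  INR #|C4_copies F| <= C4_budget E F ->
  INR #|C4_copies (F :\ e)| <= C4_budget E (F :\ e).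
Proof.
move=> sFE eF excess in_budget.
have L_gt0 : 0 < L by have := ln_gt_half (card_ge2_of_edge sgE (subsetP sFE e eF)); lra.
have f_gt0 : 0 < INR #|F| by apply/lt_0_INR/ltP/card_gt0P; exists e.
have fm : INR #|F| <= INR #|E| by apply/le_INR/leP/subset_leq_card.
have cardFe : INR #|F :\ e| = INR #|F| - 1.
  by rewrite [in INR #|F|](cardsD1 e F) eF add1n S_INR Rplus_minus_r.
have copiesFe : INR #|C4_copies (F :\ e)| =
    INR #|C4_copies F| - INR (C4_deg F e).
  by rewrite -(card_C4_copies_setD1 F e) plus_INR; lra.
rewrite copiesFe /C4_budget cardFe.
have -> : 4 * L - 16 * L * (INR #|E| - (INR #|F| - 1)) / INR #|E| =
    4 * L - 16 * L * (INR #|E| - INR #|F|) / INR #|E| - 16 * L / INR #|E|.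
  by field; lra.
by apply: (remove_share_exp (f := INR #|F|)) => //; [exact: pos_INR | lra].
Qed.

Lemma C4_copies_within_full_budget (e : {set T}) :
  e \in E -> INR #|C4_copies E| <= C4_budget E E.
Proof.
move=> eE.
have m_gt0 : 0 < INR #|E| by apply/lt_0_INR/ltP/card_gt0P; exists e.
have n_gt0 : 0 < INR #|T|.
  by apply/lt_0_INR/ltP; apply: leq_trans (card_ge2_of_edge sgE eE).
rewrite /C4_budget Rminus_diag Rmult_0_r /Rdiv Rmult_0_l Rminus_0_r.
have -> : 4 * L = ln (INR #|T| ^ 4) by rewrite ln_pow //=; ring.
rewrite exp_ln; last exact: pow_lt.
by have /leP/le_INR := card_C4_copies_le E; rewrite !mult_INR /=; lra.
Qed.

Lemma unbalanced_edge_bounds (F : {set {set T}}) (e : {set T}) :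
  F \subset E -> e \in F ->
  16 * L / INR #|F| * INR #|C4_copies F| < INR (C4_deg F e) ->
  1 <= INR #|C4_copies F| /\ 16 * L < INR #|F|.
Proof.
move=> sFE eF excess.
have L_gt0 : 0 < L by have := ln_gt_half (card_ge2_of_edge sgE (subsetP sFE e eF)); lra.
have f_gt0 : 0 < INR #|F| by apply/lt_0_INR/ltP/card_gt0P; exists e.
have DQ : INR (C4_deg F e) <= INR #|C4_copies F| by apply/le_INR/leP/C4_deg_le.
have share_ge0 : 0 <= 16 * L / INR #|F| * INR #|C4_copies F|.
  by apply: Rmult_le_pos; [apply: Rle_mult_inv_pos; lra | exact: pos_INR].
have deg_ge1 : 1 <= INR (C4_deg F e).
  have /INR_lt deg_pos : INR 0 < INR (C4_deg F e) by change (INR 0) with 0; lra.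
  by move: (le_INR _ _ deg_pos).
split; first lra.
by apply: share_lt excess; lra.
Qed.

Lemma greedy_deletion (F : {set {set T}}) :
  F \subset E -> (#|E| <= 2 * #|F|)%nat -> INR #|C4_copies F| <= C4_budget E F ->
  exists E' : {set {set T}},
    [/\ E' \subset E, (#|E| <= 2 * #|E'|)%nat & C4_balanced E'].
Proof.
have [k] := ubnP #|F|; elim: k F => // k IH F ltFk sFE halfF in_budget.
case: (classic (C4_balanced F)) => [balF | /not_all_ex_not[e]]; first by exists F.
move=> not_bal_e; have [eF /Rnot_le_lt excess] := imply_to_and _ _ not_bal_e.
have [copies_ge1 f_large] := unbalanced_edge_bounds sFE eF excess.
have L_gt_half := ln_gt_half (card_ge2_of_edge sgE (subsetP sFE e eF)).
have cardF : #|F| = (#|F :\ e|).+1 by rewrite (cardsD1 e F) eF.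
(* Either F :\ e still has half of the edges of E, and we recurse, or
   4 e(F) < 3 e(E), and the budget left for F is below one copy. *)
case: (leqP #|E| (2 * (#|F| - 1))) => halfFe.
  apply: (IH (F :\ e)).
  - by rewrite -ltnS -cardF.
  - exact: subset_trans (subsetDl F [set e]) sFE.
  - by move: halfFe; rewrite cardF subSS subn0.
  - exact: delete_unbalanced_edge.
have m_gt0 : 0 < INR #|E|.
  apply: Rlt_le_trans (le_INR _ _ (leP (subset_leq_card sFE))).
  by apply/lt_0_INR/ltP/card_gt0P; exists e.
have /ltP f_gt2 : (2 < #|F|)%coq_nat.
  by apply/INR_lt/(Rlt_trans _ (16 * L)); first by change (INR 2) with 2; lra.
have /ltP/lt_INR : (4 * #|F| < 3 * #|E|)%nat by lia.
have [four three] : INR 4 = 4 /\ INR 3 = 3 by split; rewrite /=; ring.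
rewrite !mult_INR four three => fm.
have L_gt0 : 0 < L by lra.
have budget_small := Rle_lt_trans _ _ _ in_budget (budget_lt1 L_gt0 m_gt0 fm).
by case: (Rlt_irrefl 1 (Rle_lt_trans _ _ _ copies_ge1 budget_small)).
Qed.
End GreedyDeletion.

Local Close Scope R_scope.

Theorem lemma2p10 (T : finType) (E : {set {set T}}) :
  simple_graph E -> E != set0 ->
  exists E' : {set {set T}},
    [/\ E' \subset E,
        (#|E| <= 2 * #|E'|)%N &
        forall e, e \in E' ->
          (INR (C4_deg E' e) <=
             16 * ln (INR #|T|) / INR #|E'| * INR #|C4_copies E'|)%R].
Proof.
move=> sgE /set0Pn[e eE].
have halfE : (#|E| <= 2 * #|E|)%N by rewrite mul2n -addnn leq_addr.
have [E' [sE'E halfE' balE']] :=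
  greedy_deletion sgE (subxx E) halfE (C4_copies_within_full_budget sgE eE).
by exists E'.
Qed.
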